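(* Let $G$ be a finite, simple, connected graph of order $n\ge 4$. If there exists a vertex $u\in V(G)$ with $\deg(u)=n-3$ such that the two vertices of $V(G)\setminus N[u]$ are not twins, then $\gamma_P(G)=1$.
   Context: Two vertices $x,y$ are twins if $N(x)=N(y)$ or $N[x]=N[y]$. For $U\subseteq V(G)$, $cl(U)$ is obtained by coloring $U$ black and repeatedly applying: if a black vertex has exactly one white neighbor, that neighbor becomes black. $S$ is a power dominating set if $cl(N[S])=V(G)$; $\gamma_P(G)$ is the minimum size of a power dominating set. *)

From mathcomp Require Import all_boot.
Set Implicit Arguments. Unset Strict Implicit. Unset Printing Implicit Defensive.

Definition simple_graph (T : finType) (e : rel T) : Prop :=
  symmetric e /\ irreflexive e.

Definition connected_graph (T : finType) (e : rel T) : Prop :=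
  forall x y : T, connect e x y.

Definition nbh (T : finType) (e : rel T) (x : T) : {set T} := [set y | e x y].
Definition cnbh (T : finType) (e : rel T) (x : T) : {set T} := x |: nbh e x.

Definition cnbhS (T : finType) (e : rel T) (S : {set T}) : {set T} :=
  \bigcup_(x in S) cnbh e x.

Definition deg (T : finType) (e : rel T) (x : T) : nat := #|nbh e x|.

Definition twins (T : finType) (e : rel T) (x y : T) : Prop :=
  nbh e x = nbh e y \/ cnbh e x = cnbh e y.

Definition prop_closed (T : finType) (e : rel T) (B : {set T}) : bool :=
  [forall v, forall w,
     [&& v \in B, e v w & nbh e v :\: B == [set w]] ==> (w \in B)].

(* cl(U): result of repeatedly applying the propagation rule starting from U,
   i.e. the smallest set containing U that is closed under the rule. *)
Definition cl (T : finType) (e : rel T) (U : {set T}) : {set T} :=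
  \bigcap_(B : {set T} | (U \subset B) && prop_closed e B) B.

Definition power_dominating (T : finType) (e : rel T) (S : {set T}) : bool :=
  cl e (cnbhS e S) == [set: T].

Definition gammaP (T : finType) (e : rel T) : nat :=
  \big[minn/#|T|]_(S : {set T} | power_dominating e S) #|S|.
(* the default #|T| is harmless: S = setT is always power dominating *)

From mathcomp Require Import all_boot all_order zify.
Import Order.TTheory.

Set Implicit Arguments. Unset Strict Implicit. Unset Printing Implicit Defensive.

(* Since deg u = n - 3, exactly two vertices x, y lie outside N[u].  They are
   not twins, so some neighbour v of u is adjacent to exactly one of them,
   say x.  Starting from N[u], the only white neighbour of v is x, so x is
   forced; then y is the only white vertex and any neighbour of y (which
   exists by connectivity) forces it.  Hence {u} is power dominating, while
   the empty set never is. *)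

Section Forcing.

Variables (T : finType) (e : rel T).

Lemma prop_closed_force (B : {set T}) v w :
  prop_closed e B -> v \in B -> e v w ->
  (forall z, e v z -> z != w -> z \in B) -> w \in B.
Proof.
move=> /forallP closedB vB evw blackB; have [//|wNB] := boolP (w \in B).
have /forallP /(_ w) /implyP := closedB v; rewrite (negbTE wNB); apply.
rewrite vB evw; apply/eqP/setP => z; rewrite !inE.
have [->|zNw] := eqVneq z w; first by rewrite wNB evw.
by case evz: (e v z); rewrite ?andbF // (blackB z evz zNw).
Qed.

Lemma cl_eq_setT (U : {set T}) :
  (forall B : {set T}, U \subset B -> prop_closed e B -> [set: T] \subset B) ->
  cl e U = [set: T].
Proof.
move=> closedT; apply/eqP; rewrite eqEsubset subsetT.
by apply/bigcapsP => B /andP[UB closedB]; apply: closedT.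
Qed.

Lemma cl_set0 : cl e set0 = set0.
Proof.
apply/eqP; rewrite -subset0; apply: bigcap_min; rewrite ?sub0set //.
by apply/forallP => v; apply/forallP => w; rewrite inE.
Qed.

Lemma power_dominating_gt0 (S : {set T}) :
  0 < #|T| -> power_dominating e S -> 0 < #|S|.
Proof.
case/card_gt0P => x _; rewrite card_gt0; apply: contraTneq => ->.
rewrite /power_dominating /cnbhS big_set0 cl_set0.
by apply/eqP => /setP /(_ x); rewrite !inE.
Qed.

Lemma gammaP_le (S : {set T}) : power_dominating e S -> gammaP e <= #|S|.
Proof.
move=> pdS; have := @bigmin_le_cond _ nat _ #|T| S _ (fun S => #|S|) pdS.
by rewrite minEnat.
Qed.

Lemma gammaP_gt0 : 0 < #|T| -> 0 < gammaP e.
Proof.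
move=> T_gt0; apply: (big_ind (fun n => 0 < n)) => // [m n m_gt0 n_gt0 | S].
  by rewrite leq_min m_gt0.
exact: power_dominating_gt0.
Qed.

Lemma exists_edge_of_connect x y : connect e x y -> y != x -> exists w, e x w.
Proof.
case/connectP => [[|w p] /= xp ->]; first by rewrite eqxx.
by exists w; case/andP: xp.
Qed.

End Forcing.

Section SimpleGraph.

Variables (T : finType) (e : rel T).
Hypotheses (e_sym : symmetric e) (e_irr : irreflexive e).

Lemma card_setC_cnbh u : #|~: cnbh e u| = #|T| - (deg e u).+1.
Proof.
have := cardsC (cnbh e u); rewrite cardsU1 -/(deg e u) => <-.
by rewrite inE e_irr addKn.
Qed.

Lemma prop_closed_all_but_one (B : {set T}) y w :
  prop_closed e B -> e y w -> (forall z, z != y -> z \in B) -> y \in B.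
Proof.
move=> closedB eyw blackB; apply: (prop_closed_force closedB (v := w)) => [||z _].
- by apply: blackB; apply: contraTneq eyw => ->; rewrite e_irr.
- by rewrite e_sym.
- exact: blackB.
Qed.

Lemma twins_of_agree x y :
  (forall z, z != x -> z != y -> e x z = e y z) -> twins e x y.
Proof.
move=> agree; case exy: (e x y); [right | left]; apply/setP => z; rewrite !inE.
all: have [->|zNx] := eqVneq z x; rewrite ?e_irr ?(e_sym y x) ?exy ?orbT //.
all: have [->|zNy] := eqVneq z y; rewrite ?e_irr ?exy ?orbT ?agree //.
Qed.

Section TwoNonNeighbours.

Variables u x y : T.
Hypothesis setC_cnbh : ~: cnbh e u = [set x; y].

Lemma mem_cnbh_two z : (z \in cnbh e u) = (z != x) && (z != y).
Proof. by rewrite -[z \in _]negbK -in_setC setC_cnbh !inE negb_or. Qed.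

Lemma exists_nbh_distinguishing :
  ~ twins e x y -> exists2 v, v \in nbh e u & e v x != e v y.
Proof.
move=> not_twins.
have [/exists_inP //|/exists_inPn agree_nbh] :=
  boolP [exists v in nbh e u, e v x != e v y].
case: not_twins; apply: twins_of_agree => z zNx zNy.
have := mem_cnbh_two z; rewrite zNx zNy /cnbh in_setU1 => /orP[/eqP -> | zu].
  have nonadj t : t \notin cnbh e u -> e t u = false.
    by rewrite e_sym /cnbh /nbh !inE => /norP[_ /negbTE].
  by rewrite !nonadj // mem_cnbh_two eqxx ?andbF.
by rewrite !(e_sym _ z); apply/eqP; have := agree_nbh z zu; rewrite negbK.
Qed.

Lemma prop_closed_cnbh_two (B : {set T}) v w :
  prop_closed e B -> cnbh e u \subset B -> v \in nbh e u ->
  e v x -> ~~ e v y -> e y w -> [set x; y] \subset B.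
Proof.
move=> closedB uB vu evx evyN eyw.
have blackB z : z != x -> z != y -> z \in B.
  by move=> zNx zNy; apply: (subsetP uB); rewrite mem_cnbh_two zNx.
have xB : x \in B.
  apply: (prop_closed_force closedB _ evx) => [|z evz zNx].
    by apply: (subsetP uB); rewrite in_setU1 vu orbT.
  by apply: blackB zNx _; apply: contraNneq evyN => <-.
rewrite subUset !sub1set xB /=.
apply: (prop_closed_all_but_one closedB eyw) => z zNy.
by have [->|zNx] := eqVneq z x; last exact: blackB.
Qed.

End TwoNonNeighbours.

Lemma power_dominating_set1 u x y :
  connected_graph e -> x != y -> ~: cnbh e u = [set x; y] -> ~ twins e x y ->
  power_dominating e [set u].
Proof.
move=> conn xNy setC_u not_twins; apply/eqP/cl_eq_setT => B.
rewrite /cnbhS big_set1 => uB closedB.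
have [w eyw] := exists_edge_of_connect (conn y x) xNy.
have yNx : y != x by rewrite eq_sym.
have [w' exw'] := exists_edge_of_connect (conn x y) yNx.
have xyB : [set x; y] \subset B.
  have [v vu] := exists_nbh_distinguishing setC_u not_twins.
  case evx: (e v x); case evy: (e v y) => // _.
    exact: (prop_closed_cnbh_two setC_u closedB uB vu evx (negbT evy) eyw).
  rewrite setUC; apply: (prop_closed_cnbh_two _ closedB uB vu evy (negbT evx) exw').
  by rewrite setUC.
by rewrite -(setUCr (cnbh e u)) subUset uB setC_u.
Qed.

End SimpleGraph.

Theorem mainTheorem7 (T : finType) (e : rel T) :
  simple_graph e -> connected_graph e -> 4 <= #|T| ->
  (exists u : T, deg e u = #|T| - 3 /\
     (forall x y : T, x != y -> ~: cnbh e u = [set x; y] -> ~ twins e x y)) ->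
  gammaP e = 1.
Proof.
move=> [e_sym e_irr] conn T_ge4 [u [deg_u not_twins]].
have : #|~: cnbh e u| == 2.
  by rewrite (card_setC_cnbh e_irr) deg_u; apply/eqP; lia.
case/cards2P => x [y [xNy setC_u]].
have pd_u := power_dominating_set1 e_sym e_irr conn xNy setC_u
  (not_twins x y xNy setC_u).
apply/anti_leq; rewrite -{1}(cards1 u) gammaP_le //=.
by apply: gammaP_gt0; apply: leq_trans T_ge4.
Qed.
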